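(* Let $\Sigma=(\tilde{\mathbf x},\tilde B(Q))$ be a $(G,\psi)$-admissible seed, and let $K$ be a mutable $G$-orbit. If the quiver $\mu_K(Q)$ is $G$-admissible, then the seed $\mu_K(\Sigma)$ is $(G,\psi)$-admissible, and $(\mu_K(\Sigma))^G=\mu_K(\Sigma^G)$.
   Context: $Q$ is a quiver with vertices $1,\dots,m$, mutable $1,\dots,n$, frozen $n+1,\dots,m$; $\tilde B(Q)=(b_{ij})$ is the $m\times n$ matrix with $b_{ij}$ = #arrows $i\to j$ minus #arrows $j\to i$. A seed $(\tilde{\mathbf x},\tilde B)$ in a field $\mathcal F$ consists of a free generating tuple $\tilde{\mathbf x}=(x_1,\dots,x_m)$ of $\mathcal F$ and such a matrix; mutation at mutable $k$ replaces $\tilde B$ by its matrix mutation ($b'_{ij}=-b_{ij}$ if $k\in\{i,j\}$, else $b_{ij}+\mathrm{sgn}(b_{ik})\max(b_{ik}b_{kj},0)$) and $x_k$ by $x_k'=(\prod_{b_{ik}>0}x_i^{b_{ik}}+\prod_{b_{ik}<0}x_i^{-b_{ik}})/x_k$ (products over $i\le m$). A group $G$ acts on $\{1,\dots,m\}$ mapping $\{1,\dots,n\}$ to itself; $i\sim i'$ means same orbit; $m^G$ is the number of orbits. $Q$ is $G$-admissible if: (1) $i\sim i'$ implies $i$ mutable iff $i'$ mutable; (2) $b_{ij}=b_{g(i),g(j)}$; (3) $b_{ii'}=0$ for mutable $i\sim i'$; (4) $b_{ij}b_{i'j}\ge0$ for $i\sim i'$, $j$ mutable. Then $\tilde B^G=(b^G_{IJ})$,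 rows indexed by orbits and columns by mutable orbits, $b^G_{IJ}=\sum_{i\in I}b_{ij}$ ($j\in J$ arbitrary). $\mathcal F$ (resp. $\mathcal F^G$) is a field of rational functions in $m$ (resp. $m^G$) variables, $\mathcal F_{\mathrm{sf}}$, $\mathcal F^G_{\mathrm{sf}}$ the semifields of subtraction-free rational expressions, and $\psi:\mathcal F_{\mathrm{sf}}\to\mathcal F^G_{\mathrm{sf}}$ a surjective semifield homomorphism. A seed $\Sigma=(\tilde{\mathbf x},\tilde B(Q))$ in $\mathcal F$ is $(G,\psi)$-admissible if $Q$ is $G$-admissible and $\psi(x_i)=\psi(x_{i'})$ whenever $i\sim i'$; its folded seed is $\Sigma^G=(\tilde{\mathbf x}^G,\tilde B^G)$ in $\mathcal F^G$ with $\tilde{\mathbf x}^G=(x_I)$, $x_I=\psi(x_i)$ for $i\in I$. For a mutable orbit $K$, $\mu_K$ on $\Sigma$ denotes the composition of the (commuting) mutations at all $k\in K$, and on $\Sigma^G$ the single mutation at the index $K$. *)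

From HB Require Import structures.
From mathcomp Require Import all_boot all_order all_algebra all_fingroup.
From mathcomp Require Import fraction.
From mathcomp Require Import mpoly.
Set Implicit Arguments.
Unset Strict Implicit.
Unset Printing Implicit Defensive.
Import Order.TTheory GRing.Theory Num.Theory.
Local Open Scope ring_scope.

Definition RF (V : finType) : fieldType := {fraction {mpoly rat[#|V|]}}.

Definition rfvar (V : finType) (v : V) : RF V :=
  FracField.tofrac ('X_(enum_rank v) : {mpoly rat[#|V|]}).

Inductive sf (V : finType) : RF V -> Prop :=
| sf_var (v : V) : sf (rfvar v)
| sf_add (a b : RF V) : sf a -> sf b -> sf (a + b)
| sf_mul (a b : RF V) : sf a -> sf b -> sf (a * b)
| sf_div (a b : RF V) : sf a -> sf b -> sf (a / b).

Definition sf_hom (V W : finType) (psi : RF V -> RF W) : Prop :=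
  (forall a, sf a -> sf (psi a)) /\
  (forall a b, sf a -> sf b ->
     [/\ psi (a + b) = psi a + psi b,
         psi (a * b) = psi a * psi b &
         psi (a / b) = psi a / psi b]).

Definition sf_surj (V W : finType) (psi : RF V -> RF W) : Prop :=
  forall c, sf c -> exists2 a, sf a & psi a = c.

Definition rfeval (V : finType) (x : V -> RF V) (p : {mpoly rat[#|V|]}) : RF V :=
  mmap ratr (fun i => x (enum_val i)) p.

(* x is a free generating tuple of the field RF V (over Q). *)
Definition free_gen (V : finType) (x : V -> RF V) : Prop :=
  (forall p, rfeval x p = 0 -> p = 0) /\
  (forall f : RF V, exists p q, rfeval x q != 0 /\ f = rfeval x p / rfeval x q).

(* An (extended) exchange matrix on the vertex set V with mutable vertices
   [mut]: B i j is the entry b_ij.  Only the columns j with [mut j] are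
   meaningful; by convention the frozen columns are 0. *)
Definition exmx (V : finType) := V -> V -> int.

(* B = B~(Q) for a quiver Q (no loops, no 2-cycles, no arrows between frozen
   vertices): frozen columns are 0 and the principal part is skew-symmetric. *)
Definition quiver_mx (V : finType) (mut : pred V) (B : exmx V) : Prop :=
  (forall i j, ~~ mut j -> B i j = 0) /\
  (forall i j, mut i -> mut j -> B i j = - B j i).

Definition mx_mut (V : finType) (mut : pred V) (B : exmx V) (k : V) : exmx V :=
  fun i j =>
    if ~~ mut j then 0
    else if (i == k) || (j == k) then - B i j
    else B i j + sgz (B i k) * Num.max (B i k * B k j) 0.

Definition x_mut (V : finType) (L : fieldType) (B : exmx V) (x : V -> L) (k : V)
  : V -> L :=
  fun i =>
    if i == k then
      ((\prod_(j | 0 < B j k) x j ^+ `|B j k|%N) +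
       (\prod_(j | B j k < 0) x j ^+ `|B j k|%N)) / x k
    else x i.

Definition seed (V : finType) (L : Type) := ((V -> L) * exmx V)%type.

Definition seed_mut (V : finType) (L : fieldType) (mut : pred V)
  (s : seed V L) (k : V) : seed V L :=
  (x_mut s.2 s.1 k, mx_mut mut s.2 k).

Section Folding.
Variable V : finType.
Variable G : {group {perm V}}.

Definition orbeq (i i' : V) : bool := i' \in orbit 'P G i.

Definition orbits : {set {set V}} := [set orbit 'P G i | i : V].

Definition Gorb : finType := {I : {set V} | I \in orbits}.

Definition omut (mut : pred V) : pred Gorb := fun I => [exists j in val I, mut j].

Definition G_admissible (mut : pred V) (B : exmx V) : Prop :=
  [/\ (forall i i', orbeq i i' -> mut i = mut i'),
      (forall g i j, g \in G -> mut j -> B i j = B (g i) (g j)),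
      (forall i i', mut i -> orbeq i i' -> B i i' = 0)
    & (forall i i' j, orbeq i i' -> mut j -> 0 <= B i j * B i' j)].

Definition psi_admissible (mut : pred V) (psi : RF V -> RF Gorb)
  (s : seed V (RF V)) : Prop :=
  [/\ G_admissible mut s.2,
      (forall i, sf (s.1 i))
    & (forall i i', orbeq i i' -> psi (s.1 i) = psi (s.1 i'))].

Definition fold_x (psi : RF V -> RF Gorb) (x : V -> RF V) : Gorb -> RF Gorb :=
  fun I => if [pick i in val I] is Some i then psi (x i) else 0.

Definition fold_B (mut : pred V) (B : exmx V) : exmx Gorb :=
  fun I J =>
    if ~~ omut mut J then 0
    else if [pick j in val J] is Some j then \sum_(i in val I) B i j else 0.

Definition fold_seed (mut : pred V) (psi : RF V -> RF Gorb) (s : seed V (RF V))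
  : seed Gorb (RF Gorb) :=
  (fold_x psi s.1, fold_B mut s.2).

Definition orbit_mut (mut : pred V) (K : Gorb) (s : seed V (RF V)) : seed V (RF V) :=
  foldr (fun k s' => seed_mut mut s' k) s (enum (val K)).

Definition orbit_mx_mut (mut : pred V) (K : Gorb) (B : exmx V) : exmx V :=
  foldr (fun k B' => mx_mut mut B' k) B (enum (val K)).

End Folding.

(* mutable vertices of 'I_m are 1..n, i.e. indices < n *)
Definition mutI (m n : nat) : pred 'I_m := fun i => (i < n)%N.

Arguments orbeq [V] G i i'.
Arguments orbits [V] G.
Arguments G_admissible [V] G mut B.
Arguments psi_admissible [V] G mut psi s.
Arguments mutI m n i : clear implicits.

From HB Require Import structures.
From mathcomp Require Import all_boot all_order all_algebra all_fingroup.
From mathcomp Require Import fraction.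
From mathcomp Require Import mpoly.
From mathcomp Require Import zify.
From Stdlib Require Import FunctionalExtensionality.
Set Implicit Arguments. Unset Strict Implicit. Unset Printing Implicit Defensive.
Import Order.TTheory GRing.Theory Num.Theory.
Local Open Scope ring_scope.

(* The vertices of a mutable orbit K are pairwise unconnected (b_kk' = 0), so the
   mutations at the k in K do not interact: mu_K has a closed form in which every new
   variable x_k' is computed from the original seed and, away from K,
   b'_ij = b_ij + sum_(k in K) ([b_ik]_+ [b_kj]_+ - [b_ik]_- [b_kj]_-).
   Admissibility condition (4) makes each column sign-coherent on every orbit, so positive
   and negative parts, and with them these mutation terms, add up over orbits; likewise
   psi sends the two exchange monomials of x_k to those of the folded seed. *)

Section SignCoherent.
Variables (T : finType) (A : {set T}) (a : T -> int).

Definition sign_coherent : Prop := {in A &, forall i i', 0 <= a i * a i'}.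

Hypothesis coh : sign_coherent.

Lemma sign_coherentP : {in A, forall i, 0 <= a i} \/ {in A, forall i, a i <= 0}.
Proof.
case: (pickP [pred i in A | 0 < a i]) => [i /andP [iA ai_gt0] | no_pos].
  by left => j jA; have := coh iA jA; rewrite pmulr_rge0.
by right => j jA; have := no_pos j; rewrite /= jA /= => /negbT; rewrite -leNgt.
Qed.

Lemma sumr_max0 : \sum_(i in A) Num.max (a i) 0 = Num.max (\sum_(i in A) a i) 0.
Proof.
case: sign_coherentP => [ge0 | le0].
  rewrite max_l ?sumr_ge0 //; apply: eq_bigr => i iA; exact/max_l/ge0.
by rewrite max_r ?sumr_le0 // big1 // => i iA; apply/max_r/le0.
Qed.

Lemma sumr_min0 : \sum_(i in A) Num.min (a i) 0 = Num.min (\sum_(i in A) a i) 0.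
Proof.
case: sign_coherentP => [ge0 | le0].
  by rewrite min_r ?sumr_ge0 // big1 // => i iA; apply/min_r/ge0.
rewrite min_l ?sumr_le0 //; apply: eq_bigr => i iA; exact/min_l/le0.
Qed.

Lemma sum_absz_max0 :
  (\sum_(i in A) absz (Num.max (a i) 0%R))%N = absz (Num.max (\sum_(i in A) a i) 0).
Proof.
have max0_ge0 (c : int) : 0 <= Num.max c 0 by rewrite le_max lexx orbT.
apply/eqP; rewrite -eqz_nat -sumr_max0 gez0_abs ?sumr_ge0 // -natz natr_sum.
by apply/eqP/eq_bigr => i _; rewrite natz gez0_abs.
Qed.

End SignCoherent.

Lemma sign_coherentN (T : finType) (A : {set T}) (a : T -> int) :
  sign_coherent A a -> sign_coherent A (fun i => - a i).
Proof. by move=> coh i i' iA i'A; rewrite mulrNN coh. Qed.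

Definition mx_mut_term (a b : int) : int := sgz a * Num.max (a * b) 0.

Lemma mx_mut_termE a b :
  mx_mut_term a b = Num.max a 0 * Num.max b 0 - Num.min a 0 * Num.min b 0.
Proof.
rewrite /mx_mut_term; case: (ltrgt0P a) => [a_gt0 | a_lt0 | ->].
- by rewrite gtr0_sgz //; nia.
- by rewrite ltr0_sgz //; nia.
- by rewrite sgz0; nia.
Qed.

Lemma sum_mx_mut_term_l (T : finType) (A : {set T}) (a : T -> int) b :
  sign_coherent A a ->
  \sum_(i in A) mx_mut_term (a i) b = mx_mut_term (\sum_(i in A) a i) b.
Proof.
move=> coh; rewrite mx_mut_termE -sumr_max0 // -sumr_min0 // !mulr_suml -sumrB.
by apply: eq_bigr => i _; rewrite mx_mut_termE.
Qed.

Lemma sum_mx_mut_term_r (T : finType) (A : {set T}) a (b : T -> int) :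
  sign_coherent A b ->
  \sum_(i in A) mx_mut_term a (b i) = mx_mut_term a (\sum_(i in A) b i).
Proof.
move=> coh; rewrite mx_mut_termE -sumr_max0 // -sumr_min0 // !mulr_sumr -sumrB.
by apply: eq_bigr => i _; rewrite mx_mut_termE.
Qed.

Lemma prod_pos_powers (R : pzSemiRingType) (T : finType) (y : T -> R) (a : T -> int) :
  \prod_(i | 0 < a i) y i ^+ absz (a i) = \prod_i y i ^+ absz (Num.max (a i) 0).
Proof.
rewrite big_mkcond; apply: eq_bigr => i _.
by case: ltP => [ai_gt0 | _]; rewrite ?max_l ?ltW // max_r.
Qed.

Section Orbits.
Variables (V : finType) (G : {group {perm V}}).

Definition Gorb_of (i : V) : Gorb G := exist _ (orbit 'P G i) (imset_f _ (erefl true)).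

Lemma mem_Gorb (I : Gorb G) i : (i \in val I) = (Gorb_of i == I).
Proof.
case: I => I IG; rewrite -val_eqE /=; case/imsetP: IG => i0 _ ->.
exact/orbit_eqP/eqP.
Qed.

Lemma Gorb_of_mem i : i \in val (Gorb_of i).
Proof. by rewrite mem_Gorb. Qed.

Lemma orbeqE i i' : orbeq G i i' = (Gorb_of i == Gorb_of i').
Proof. by rewrite /orbeq -[orbit _ _ i]/(val (Gorb_of i)) mem_Gorb eq_sym. Qed.

Lemma orbeq_sym i i' : orbeq G i i' = orbeq G i' i.
Proof. by rewrite !orbeqE eq_sym. Qed.

Lemma orbeq_mem (I : Gorb G) i i' : i \in val I -> i' \in val I -> orbeq G i i'.
Proof. by rewrite orbeqE !mem_Gorb => /eqP-> /eqP->. Qed.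

Lemma mem_orbeq (I : Gorb G) i i' : i \in val I -> orbeq G i i' -> i' \in val I.
Proof. by rewrite orbeqE !mem_Gorb => /eqP-> /eqP->. Qed.

Lemma Gorb_of_perm g i : g \in G -> Gorb_of (g i) = Gorb_of i.
Proof. by move=> gG; apply/eqP; rewrite -mem_Gorb; apply: (mem_orbit 'P). Qed.

Lemma Gorb_of_surj (I : Gorb G) : exists i, Gorb_of i = I.
Proof. by case: I => I /[dup] /imsetP [i _ ->] IG; exists i; apply: val_inj. Qed.

Lemma Gorb_transitive (I : Gorb G) i k :
  i \in val I -> k \in val I -> exists2 g, g \in G & k = g i.
Proof.
rewrite !mem_Gorb => /eqP <- /eqP /esym /eqP; rewrite -orbeqE.
by case/orbitP => g gG <-; exists g.
Qed.

Lemma fold_x_rep (psi : RF V -> RF (Gorb G)) (x : V -> RF V) (I : Gorb G) i :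
  (forall i i', orbeq G i i' -> psi (x i) = psi (x i')) ->
  i \in val I -> fold_x psi x I = psi (x i).
Proof.
move=> psi_x_orb iI; rewrite /fold_x; case: pickP => [i0 i0I | /(_ i)]; last by rewrite iI.
exact/psi_x_orb/(orbeq_mem i0I iI).
Qed.

Section Admissible.
Variables (mut : pred V) (B : exmx V).
Hypothesis B_adm : G_admissible G mut B.

Lemma omut_mem (I : Gorb G) i : i \in val I -> omut mut I = mut i.
Proof.
case: B_adm => mut_orb _ _ _ iI; apply/existsP/idP => [[j /andP [jI mj]] | mi].
  by rewrite -(mut_orb j i) // (orbeq_mem jI iI).
by exists i; rewrite iI.
Qed.

Lemma sign_coherent_col (I : Gorb G) j : mut j -> sign_coherent (val I) (B^~ j).
Proof. by case: B_adm => _ _ _ coh mj i i' iI i'I; apply: coh (orbeq_mem iI i'I) mj. Qed.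

Lemma sum_col_orbit (I J : Gorb G) j j' :
  j \in val J -> j' \in val J -> mut j ->
  \sum_(i in val I) B i j = \sum_(i in val I) B i j'.
Proof.
case: B_adm => _ B_perm _ _ jJ j'J mj; have [g gG ->] := Gorb_transitive jJ j'J.
rewrite [RHS](reindex_inj (@perm_inj _ g)) /=.
apply: eq_big => [i | i _]; first by rewrite !mem_Gorb Gorb_of_perm.
exact: B_perm.
Qed.

Lemma fold_B_rep (I J : Gorb G) j :
  j \in val J -> fold_B mut B I J = if mut j then \sum_(i in val I) B i j else 0.
Proof.
move=> jJ; rewrite /fold_B (omut_mem jJ); case: (boolP (mut j)) => //= mj.
case: pickP => [j0 j0J | /(_ j)]; last by rewrite jJ.
by rewrite (sum_col_orbit I j0J jJ) // -(omut_mem j0J) (omut_mem jJ).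
Qed.

Lemma sum_mx_mut_term_orbit (I K : Gorb G) k0 j :
  k0 \in val K -> omut mut K -> mut j ->
  \sum_(i in val I) \sum_(k in val K) mx_mut_term (B i k) (B k j) =
  mx_mut_term (\sum_(i in val I) B i k0) (\sum_(k in val K) B k j).
Proof.
move=> k0K K_mut mj; rewrite exchange_big -sum_mx_mut_term_r; last exact: sign_coherent_col.
apply: eq_bigr => k kK; have mk : mut k by rewrite -(omut_mem kK).
by rewrite sum_mx_mut_term_l ?(sum_col_orbit I kK k0K) //; apply: sign_coherent_col.
Qed.

End Admissible.

Lemma orbit_mut_mx (mut : pred V) (K : Gorb G) (s : seed V (RF V)) :
  (orbit_mut mut K s).2 = orbit_mx_mut mut K s.2.
Proof. by rewrite /orbit_mut /orbit_mx_mut; elim: (enum _) => //= k r ->. Qed.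

End Orbits.

Section MutationSequence.
Variables (V : finType) (L : fieldType) (mut : pred V) (x : V -> L) (B : exmx V).
Variable S : {set V}.
Hypotheses (B_frozen : forall i j, ~~ mut j -> B i j = 0)
  (S_mut : {in S, forall k, mut k}) (B_S0 : {in S &, forall k k', B k k' = 0}).

Definition mut_seq (s : seq V) : seed V L :=
  foldr (fun k s' => seed_mut mut s' k) (x, B) s.

Definition x_mut_seq (s : seq V) : V -> L :=
  fun i => if i \in s then x_mut B x i i else x i.

Definition mx_mut_seq (s : seq V) : exmx V :=
  fun i j =>
    if ~~ mut j then 0
    else if (i \in s) || (j \in s) then - B i j
    else B i j + \sum_(k <- s) mx_mut_term (B i k) (B k j).

Section Step.
Variables (s : seq V) (k : V).
Hypotheses (sS : {subset s <= S}) (kS : k \in S) (k_notin_s : k \notin s).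

Lemma mx_mut_seq_col i : mx_mut_seq s i k = B i k.
Proof.
rewrite /mx_mut_seq (S_mut kS) /= (negbTE k_notin_s) orbF.
case: ifP => [/sS iS | _]; first by rewrite B_S0 ?oppr0.
rewrite big_seq big1 ?addr0 // => k' /sS k'S.
by rewrite /mx_mut_term (B_S0 k'S kS) mulr0 maxxx mulr0.
Qed.

Lemma mx_mut_seq_row j : mut j -> mx_mut_seq s k j = B k j.
Proof.
move=> mj; rewrite /mx_mut_seq mj /= (negbTE k_notin_s) /=.
case: ifP => [/sS jS | _]; first by rewrite B_S0 ?oppr0.
rewrite big_seq big1 ?addr0 // => k' /sS k'S.
by rewrite /mx_mut_term (B_S0 kS k'S) sgz0 mul0r.
Qed.

Lemma mx_mut_seq_cons : mx_mut mut (mx_mut_seq s) k = mx_mut_seq (k :: s).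
Proof.
apply: functional_extensionality => i; apply: functional_extensionality => j.
rewrite /mx_mut; case: (boolP (mut j)) => mj /=; last by rewrite /mx_mut_seq mj.
have [-> | ik] := eqVneq i k; first by rewrite mx_mut_seq_row // /mx_mut_seq mj mem_head.
have [-> | jk] := eqVneq j k.
  by rewrite mx_mut_seq_col /mx_mut_seq (S_mut kS) mem_head !orbT.
rewrite mx_mut_seq_col mx_mut_seq_row // /mx_mut_seq mj /= !in_cons.
rewrite (negbTE ik) (negbTE jk) /= big_cons.
case: ifP => [/orP [/sS iS | /sS jS] | _].
- by rewrite (B_S0 iS kS) sgz0 mul0r addr0.
- by rewrite (B_S0 kS jS) mulr0 maxxx mulr0 addr0.
- by rewrite /mx_mut_term addrAC -addrA.
Qed.

Lemma x_mut_seq_cons : x_mut (mx_mut_seq s) (x_mut_seq s) k = x_mut_seq (k :: s).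
Proof.
apply: functional_extensionality => i; rewrite /x_mut /x_mut_seq in_cons.
have [-> | //] := eqVneq i k.
rewrite /= (negbTE k_notin_s) [RHS]/x_mut eqxx; congr ((_ + _) / _).
all: apply: eq_big => [j | j]; rewrite mx_mut_seq_col // => Bjk_ne0.
all: case: ifP => // /sS jS; by move: Bjk_ne0; rewrite (B_S0 jS kS) ltxx.
Qed.

End Step.

Lemma mut_seqE s : uniq s -> {subset s <= S} -> mut_seq s = (x_mut_seq s, mx_mut_seq s).
Proof.
elim: s => [|k s IH] /= => [_ _ | /andP [k_notin_s s_uniq] ksS].
  congr pair; apply: functional_extensionality => i //.
  apply: functional_extensionality => j; rewrite /mx_mut_seq big_nil addr0.
  by case: (boolP (mut j)) => [// | /B_frozen ->].
have kS : k \in S by apply: ksS; rewrite mem_head.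
have sS : {subset s <= S} by move=> k' k's; apply: ksS; rewrite in_cons k's orbT.
by rewrite IH // /seed_mut /= x_mut_seq_cons ?mx_mut_seq_cons.
Qed.

End MutationSequence.

Lemma rfvar_neq0 (V : finType) (v : V) : rfvar v != 0.
Proof.
rewrite /rfvar tofrac_eq0; apply/eqP => X_eq0.
have := mcoeffXU rat (enum_rank v) (enum_rank v).
by rewrite X_eq0 mcoeff0 eqxx => /esym/eqP; rewrite oner_eq0.
Qed.

Section SubtractionFree.
Variables (V : finType) (v : V).

Lemma sf1 : sf (1 : RF V).
Proof. by rewrite -(divff (rfvar_neq0 v)); apply: sf_div; apply: sf_var. Qed.

Lemma sf_exp (a : RF V) k : sf a -> sf (a ^+ k).
Proof.
move=> sf_a; elim: k => [|k IH]; first by rewrite expr0; apply: sf1.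
by rewrite exprS; apply: sf_mul.
Qed.

Lemma sf_prod (I : finType) (P : pred I) (F : I -> RF V) :
  (forall i, sf (F i)) -> sf (\prod_(i | P i) F i).
Proof. by move=> sfF; apply: big_ind => //; [exact: sf1 | exact: sf_mul]. Qed.

End SubtractionFree.

Lemma sf_x_mut (V : finType) (B : exmx V) (x : V -> RF V) k i :
  (forall i, sf (x i)) -> sf (x_mut B x k i).
Proof.
move=> sfx; rewrite /x_mut; case: eqP => _ //.
by apply/sf_div/sfx; apply: sf_add; apply: (sf_prod k) => j; apply: (sf_exp k).
Qed.

Lemma sf_hom1 (V W : finType) (psi : RF V -> RF W) (v : V) (w : W) :
  sf_hom psi -> sf_surj psi -> psi 1 = 1.
Proof.
move=> [_ psi_op] psi_surj; have [a sf_a psi_a] := psi_surj _ (sf_var w).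
have [_ psi_mul _] := psi_op _ _ sf_a (sf1 v); move: psi_mul.
by rewrite mulr1 psi_a -{1}[rfvar w]mulr1 => /(mulfI (rfvar_neq0 w)).
Qed.

Section SemifieldHom.
Variables (V W : finType) (v : V) (psi : RF V -> RF W).
Hypotheses (psi_hom : sf_hom psi) (psi1 : psi 1 = 1).

Lemma sf_homD a b : sf a -> sf b -> psi (a + b) = psi a + psi b.
Proof. by move=> sf_a sf_b; have [-> _ _] := psi_hom.2 _ _ sf_a sf_b. Qed.

Lemma sf_homM a b : sf a -> sf b -> psi (a * b) = psi a * psi b.
Proof. by move=> sf_a sf_b; have [_ -> _] := psi_hom.2 _ _ sf_a sf_b. Qed.

Lemma sf_hom_div a b : sf a -> sf b -> psi (a / b) = psi a / psi b.
Proof. by move=> sf_a sf_b; have [_ _ ->] := psi_hom.2 _ _ sf_a sf_b. Qed.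

Lemma sf_homX a k : sf a -> psi (a ^+ k) = psi a ^+ k.
Proof.
move=> sf_a; elim: k => [|k IH]; first by rewrite !expr0.
by rewrite !exprS sf_homM ?IH //; apply: sf_exp v _ _ sf_a.
Qed.

Lemma sf_hom_prod (I : finType) (P : pred I) (F : I -> RF V) :
  (forall i, sf (F i)) -> psi (\prod_(i | P i) F i) = \prod_(i | P i) psi (F i).
Proof.
move=> sfF; suff [] : sf (\prod_(i | P i) F i) /\
                     psi (\prod_(i | P i) F i) = \prod_(i | P i) psi (F i) by [].
apply: (big_ind2 (fun a b => sf a /\ psi a = b)) => //; first by split; [apply: sf1 v|].
by move=> a b a' b' [sf_a <-] [sf_a' <-]; split; [apply: sf_mul | apply: sf_homM].
Qed.

End SemifieldHom.

Section Folding.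
Variables (V : finType) (G : {group {perm V}}) (v : V).
Variables (psi : RF V -> RF (Gorb G)) (x : V -> RF V).
Hypotheses (psi_hom : sf_hom psi) (psi1 : psi 1 = 1) (sfx : forall i, sf (x i))
  (psi_x_orb : forall i i', orbeq G i i' -> psi (x i) = psi (x i')).

Lemma psi_monomial (a : V -> int) :
  (forall I : Gorb G, sign_coherent (val I) a) ->
  psi (\prod_(j | 0 < a j) x j ^+ absz (a j)) =
  \prod_(J : Gorb G | 0 < \sum_(j in val J) a j)
     fold_x psi x J ^+ absz (\sum_(j in val J) a j).
Proof.
move=> coh; rewrite !prod_pos_powers (sf_hom_prod v) // => [|j]; last exact: (sf_exp v).
rewrite (partition_big (Gorb_of G) xpredT) //=; apply: eq_bigr => J _.
rewrite -sum_absz_max0; last exact: coh.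
rewrite -prodrXr; apply: eq_big => [j | j /eqP <-]; first by rewrite mem_Gorb.
by rewrite (sf_homX v) // (fold_x_rep psi_x_orb (Gorb_of_mem G j)).
Qed.

Lemma psi_x_mut_orbit (mut : pred V) (B : exmx V) (K : Gorb G) k :
  G_admissible G mut B -> k \in val K -> mut k ->
  psi (x_mut B x k k) = x_mut (fold_B mut B) (fold_x psi x) K K.
Proof.
move=> B_adm kK mk.
have fold_B_K J : fold_B mut B J K = \sum_(j in val J) B j k.
  by rewrite (fold_B_rep B_adm J kK) mk.
have sf_monomial (P : pred V) : sf (\prod_(j | P j) x j ^+ absz (B j k)).
  by apply: (sf_prod v) => j; apply: (sf_exp v).
rewrite /x_mut !eqxx (sf_hom_div psi_hom) ?(sf_homD psi_hom) //; last exact: sf_add.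
rewrite (fold_x_rep psi_x_orb kK); congr ((_ + _) / _).
  rewrite psi_monomial => [|I]; last exact: (sign_coherent_col B_adm).
  by apply: eq_big => [J | J _]; rewrite fold_B_K.
transitivity (psi (\prod_(j | 0 < - B j k) x j ^+ absz (- B j k))).
  by congr psi; apply: eq_big => [j | j _]; rewrite ?oppr_gt0 ?abszN.
rewrite psi_monomial => [|I]; last exact/sign_coherentN/(sign_coherent_col B_adm).
by apply: eq_big => [J | J _]; rewrite fold_B_K sumrN ?oppr_gt0 ?abszN.
Qed.

End Folding.

Section OrbitMutation.
Variables (V : finType) (G : {group {perm V}}) (mut : pred V).
Variables (psi : RF V -> RF (Gorb G)) (x : V -> RF V) (B : exmx V) (K : Gorb G).
Hypotheses (psi_hom : sf_hom psi) (psi1 : psi 1 = 1)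
  (B_frozen : forall i j, ~~ mut j -> B i j = 0) (B_adm : G_admissible G mut B)
  (sfx : forall i, sf (x i))
  (psi_x_orb : forall i i', orbeq G i i' -> psi (x i) = psi (x i'))
  (K_mut : omut mut K).

Local Notation xK := (x_mut_seq x B (enum (val K))).
Local Notation BK := (mx_mut_seq mut B (enum (val K))).

Lemma K_sub_mut k : k \in val K -> mut k.
Proof. by move=> kK; rewrite -(omut_mem B_adm kK). Qed.

Lemma B_K_eq0 : {in val K &, forall k k', B k k' = 0}.
Proof.
case: B_adm => _ _ B_orb0 _ k k' kK k'K.
exact: B_orb0 (K_sub_mut kK) (orbeq_mem kK k'K).
Qed.

Lemma orbit_mutE : orbit_mut mut K (x, B) = (xK, BK).
Proof.
by apply: (mut_seqE x B_frozen K_sub_mut B_K_eq0 (enum_uniq _)) => k; rewrite mem_enum.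
Qed.

Lemma orbit_mx_mutE : orbit_mx_mut mut K B = BK.
Proof. by rewrite -[B]/((x, B).2) -orbit_mut_mx orbit_mutE. Qed.

Lemma sf_xK i : sf (xK i).
Proof. by rewrite /x_mut_seq; case: ifP => _; [apply: sf_x_mut | apply: sfx]. Qed.

Lemma psi_x_mut_K k : k \in val K ->
  psi (x_mut B x k k) = x_mut (fold_B mut B) (fold_x psi x) K K.
Proof.
move=> kK; exact: (psi_x_mut_orbit k psi_hom psi1 sfx psi_x_orb B_adm kK (K_sub_mut kK)).
Qed.

Lemma psi_xK_orbit_const i i' : orbeq G i i' -> psi (xK i) = psi (xK i').
Proof.
move=> ii'; rewrite /x_mut_seq !mem_enum.
have [iK | iNK] := boolP (i \in val K).
  by rewrite (mem_orbeq iK ii') !psi_x_mut_K // (mem_orbeq iK ii').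
have i'NK : i' \notin val K.
  by apply: contra iNK => i'K; apply: mem_orbeq i'K _; rewrite orbeq_sym.
by rewrite (negbTE i'NK); apply: psi_x_orb.
Qed.

Lemma fold_x_orbit_mut : fold_x psi xK = x_mut (fold_B mut B) (fold_x psi x) K.
Proof.
apply: functional_extensionality => I; have [i <-] := Gorb_of_surj I.
rewrite (fold_x_rep psi_xK_orbit_const (Gorb_of_mem G i)) /x_mut_seq mem_enum.
have [iK | iNK] := boolP (i \in val K).
  by rewrite psi_x_mut_K //; move: iK; rewrite mem_Gorb => /eqP ->.
rewrite /x_mut -mem_Gorb (negbTE iNK).
by rewrite (fold_x_rep psi_x_orb (Gorb_of_mem G i)).
Qed.

Lemma fold_B_orbit_mut : G_admissible G mut BK ->
  fold_B mut BK = mx_mut (omut mut) (fold_B mut B) K.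
Proof.
move=> BK_adm; apply: functional_extensionality => I.
apply: functional_extensionality => J; have [j <-] := Gorb_of_surj J.
have jJ := Gorb_of_mem G j.
have [k0 k0K] : exists k0, k0 \in val K.
  by have [k0 <-] := Gorb_of_surj K; exists k0; apply: Gorb_of_mem.
rewrite (fold_B_rep BK_adm I jJ) /mx_mut (omut_mem B_adm jJ).
case: (boolP (mut j)) => mj //=.
rewrite (fold_B_rep B_adm I jJ) (fold_B_rep B_adm I k0K) (fold_B_rep B_adm K jJ).
rewrite mj K_sub_mut //.
have [jK | jNK] := eqVneq (Gorb_of G j) K.
  rewrite orbT -sumrN; apply: eq_bigr => i _.
  by rewrite /mx_mut_seq mj !mem_enum [j \in _]mem_Gorb jK eqxx orbT.
have [IK | INK] := eqVneq I K.
  rewrite -sumrN; apply: eq_bigr => i iI.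
  by rewrite /mx_mut_seq mj !mem_enum -IK iI.
rewrite /= -[sgz _ * _]/(mx_mut_term _ _) -(sum_mx_mut_term_orbit B_adm I k0K K_mut mj).
rewrite -big_split /=; apply: eq_bigr => i iI.
move: iI; rewrite /mx_mut_seq mj !mem_enum big_enum !mem_Gorb => /eqP ->.
by rewrite (negbTE INK) (negbTE jNK).
Qed.

End OrbitMutation.

Theorem lemma4p4p8 (m n : nat) (G : {group {perm 'I_m}})
  (psi : RF 'I_m -> RF (Gorb G))
  (x : 'I_m -> RF 'I_m) (B : exmx 'I_m) (K : Gorb G) :
  (n <= m)%N ->
  (* G maps the mutable vertices to themselves *)
  (forall g i, g \in G -> mutI m n i -> mutI m n (g i)) ->
  (* psi : F_sf -> F^G_sf is a surjective semifield homomorphism *)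
  sf_hom psi -> sf_surj psi ->
  (* Sigma = (x, B~(Q)) is a seed, Q a quiver *)
  free_gen x -> quiver_mx (mutI m n) B ->
  (* Sigma is (G,psi)-admissible *)
  psi_admissible G (mutI m n) psi (x, B) ->
  (* K is a mutable G-orbit *)
  omut (mutI m n) K ->
  (* mu_K(Q) is G-admissible *)
  G_admissible G (mutI m n) (orbit_mx_mut (mutI m n) K B) ->
  psi_admissible G (mutI m n) psi (orbit_mut (mutI m n) K (x, B)) /\
  fold_seed (mutI m n) psi (orbit_mut (mutI m n) K (x, B)) =
  seed_mut (omut (mutI m n)) (fold_seed (mutI m n) psi (x, B)) K.
Proof.
move=> _ _ psi_hom psi_surj _ [B_frozen _] [B_adm sfx psi_x_orb] K_mut.
have [k0 _] := Gorb_of_surj K.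
have psi1 := sf_hom1 k0 K psi_hom psi_surj.
rewrite (orbit_mx_mutE x B_frozen B_adm K_mut) (orbit_mutE x B_frozen B_adm K_mut).
move=> BK_adm; split.
  split=> // [i | i i']; first exact: sf_xK.
  exact: psi_xK_orbit_const psi_hom psi1 B_adm sfx psi_x_orb K_mut i i'.
rewrite /fold_seed /seed_mut /=.
by rewrite (fold_x_orbit_mut psi_hom psi1 B_adm sfx psi_x_orb K_mut)
           (fold_B_orbit_mut B_adm K_mut BK_adm).
Qed.
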